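(* Let $k\ge 2$ be an integer, $p$ a prime and $a$ a positive integer, and let $n=p^a$. If $a$ is $k$-perfect (i.e. $\sigma(a)=ka$), then $n$ is $k$-multiplicatively $e$-perfect, i.e. $T_e(n)=n^k$. If $a$ is $k$-superperfect (i.e. $\sigma(\sigma(a))=ka$), then $n$ is $k$-multiplicatively $e$-superperfect, i.e. $T_e(T_e(n))=n^k$.
   Context: $\sigma(m)$ is the sum of the positive divisors of $m$. For $n=p_1^{a_1}\cdots p_r^{a_r}>1$ (prime factorization), a divisor $d=p_1^{b_1}\cdots p_r^{b_r}$ of $n$ is an exponential divisor ($e$-divisor) if $b_i\mid a_i$ for all $i$; $T_e(n)$ denotes the product of all $e$-divisors of $n$. *)

From mathcomp Require Import all_boot.

Set Implicit Arguments.
Unset Strict Implicit.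
Unset Printing Implicit Defensive.

Definition sigma (m : nat) : nat := \sum_(d <- divisors m) d.

(* d is an exponential divisor of n: d | n and for every prime p | n,
   the exponent of p in d divides the exponent of p in n
   (b_i | a_i; since a_i >= 1 this forces b_i >= 1). *)
Definition is_edivisor (d n : nat) : bool :=
  (d %| n) && all (fun q => logn q d %| logn q n) (primes n).

Definition edivisors (n : nat) : seq nat :=
  [seq d <- divisors n | is_edivisor d n].

Definition Te (n : nat) : nat := \prod_(d <- edivisors n) d.

(** The e-divisors of [p ^ n] are exactly the [p ^ b] with [b %| n], so
    [Te (p ^ n) = p ^ sigma n]. Hence [sigma a = k * a] gives
    [Te (p ^ a) = p ^ (k * a)], and applying the formula twice gives
    [Te (Te (p ^ a)) = p ^ sigma (sigma a)]. *)
From mathcomp Require Import all_boot.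

Section PrimePower.

Variable p : nat.
Hypothesis p_prime : prime p.

Lemma is_edivisor_pfactor n d : 0 < n ->
  is_edivisor d (p ^ n) = (d \in [seq p ^ b | b <- divisors n]).
Proof.
move=> n_gt0; have p_gt1 := prime_gt1 p_prime.
rewrite /is_edivisor primesX // primes_prime //= andbT.
apply/idP/idP.
- case/andP=> /(dvdn_pfactor _ _ p_prime)[b _ ->].
  by rewrite !pfactorK // => b_dvd_n; apply/mapP; exists b; rewrite // -dvdn_divisors.
- case/mapP=> b; rewrite -dvdn_divisors // => b_dvd_n ->.
  rewrite !pfactorK // b_dvd_n andbT.
  by apply/dvdn_pfactor=> //; exists b; rewrite // dvdn_leq.
Qed.

Lemma perm_edivisors_pfactor n : 0 < n ->
  perm_eq (edivisors (p ^ n)) [seq p ^ b | b <- divisors n].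
Proof.
move=> n_gt0; apply: uniq_perm.
- by rewrite filter_uniq // divisors_uniq.
- by rewrite map_inj_uniq ?divisors_uniq //; apply: expnI; exact: prime_gt1.
move=> d; rewrite mem_filter is_edivisor_pfactor // andb_idr //.
case/mapP=> b; rewrite -dvdn_divisors // => b_dvd_n ->.
by rewrite -dvdn_divisors ?expn_gt0 ?prime_gt0 // dvdn_exp2l // dvdn_leq.
Qed.

Lemma Te_pfactor n : 0 < n -> Te (p ^ n) = p ^ sigma n.
Proof.
move=> n_gt0; rewrite /Te (perm_big _ (@perm_edivisors_pfactor n n_gt0)) big_map.
by rewrite /sigma expn_sum.
Qed.

End PrimePower.

Lemma sigma_gt0 n : 0 < n -> 0 < sigma n.
Proof.
move=> n_gt0; rewrite /sigma (bigD1_seq n) ?divisors_uniq ?ltn_addr //.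
by rewrite -dvdn_divisors.
Qed.

Theorem mainTheorem3 (k p a : nat) :
  2 <= k -> prime p -> 0 < a ->
  (sigma a = k * a -> Te (p ^ a) = (p ^ a) ^ k) /\
  (sigma (sigma a) = k * a -> Te (Te (p ^ a)) = (p ^ a) ^ k).
Proof.
move=> _ p_prime a_gt0; split=> [perfect | superperfect].
  by rewrite Te_pfactor // perfect -expnM mulnC.
by rewrite !Te_pfactor ?sigma_gt0 // superperfect -expnM mulnC.
Qed.
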